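(* Let $m\ge2$, let $\eta$ be a primitive $m$-th root of unity, and let $F(x,y)=(x+y)^m$. Suppose $G(x,y)$ is a real polynomial such that $G(\eta x,\eta y)=G(x,y)$, $G=1$ on the line $x+y=1$, $G$ has only non-negative coefficients, $G(0,0)=0$, and $G$ has degree $Km$ for a positive integer $K$. Then there are real homogeneous polynomials $H_{jm}$ of degree $jm$ (or zero), $1\le j\le K-1$, such that $$G=(F-H_m)+(FH_m-H_{2m})+\dots+(FH_{(K-2)m}-H_{(K-1)m})+FH_{(K-1)m}$$ (for $K=1$ this reads $G=F$). If the $H_{jm}$ have non-negative coefficients, then $N(G)\ge Km+1$.
   Context: $N(q)$ denotes the number of distinct monomials with nonzero coefficient in the polynomial $q$. *)

From HB Require Import structures.
From mathcomp Require Import all_boot all_order all_algebra.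
From mathcomp Require Import mpoly.
From mathcomp Require Import complex.
Set Implicit Arguments. Unset Strict Implicit. Unset Printing Implicit Defensive.
Import Order.TTheory GRing.Theory Num.Theory.
Local Open Scope ring_scope.

Definition Fpoly (R : ringType) (m : nat) : {mpoly R[2]} :=
  ('X_0 + 'X_1) ^+ m.

Definition Nmon (R : ringType) (q : {mpoly R[2]}) : nat := size (msupp q).

Definition nonneg_coefs (R : numDomainType) (q : {mpoly R[2]}) : Prop :=
  forall mo : 'X_{1..2}, 0 <= q@_mo.

(* H extended by H_0 = 1 and H_{Km} = 0; index j stands for H_{jm} *)
Definition Hext (R : ringType) (K : nat) (H : nat -> {mpoly R[2]}) (j : nat)
  : {mpoly R[2]} :=
  if j == 0%N then 1 else if j == K then 0 else H j.

(* (F - H_m) + (F H_m - H_2m) + ... + (F H_{(K-2)m} - H_{(K-1)m}) + F H_{(K-1)m} *)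
Definition telescope (R : ringType) (m K : nat) (H : nat -> {mpoly R[2]})
  : {mpoly R[2]} :=
  \sum_(1 <= j < K.+1) (Fpoly R m * Hext K H j.-1 - Hext K H j).

Definition cplx (R : rcfType) (q : {mpoly R[2]}) : {mpoly R[i][2]} :=
  map_mpoly (real_complex R) q.

Definition pt (T : Type) (x y : T) : 'I_2 -> T := tnth [tuple x; y].

(* Invariance under (x, y) |-> (eta x, eta y) kills every homogeneous component
   G_d of G with m not dividing d, and G(0,0) = 0 kills G_0, so
   G = G_m + ... + G_{Km}.  Put H_0 = 1 and H_{jm} = F H_{(j-1)m} - G_{jm}: these
   are homogeneous, and on the line x + y = 1, where F = G = 1, H_{Km} vanishes,
   hence H_{Km} = 0 by homogeneity, which is the telescoping identity.

   Conversely any such decomposition has G_{jm} = F H_{(j-1)m} - H_{jm}.  With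
   nonnegative coefficients no H_{jm} with j < K vanishes, multiplying a nonzero
   nonnegative polynomial by x + y creates at least one new monomial, so
   N(F H_{(j-1)m}) >= N(H_{(j-1)m}) + m, while N(A - B) >= N(A) - N(B).
   Summing over j telescopes to N(G) >= sum_j N(G_{jm}) >= N(H_0) + Km = Km + 1. *)

From HB Require Import structures.
From mathcomp Require Import all_boot all_order all_algebra.
From mathcomp Require Import mpoly.
From mathcomp Require Import complex.
From mathcomp Require Import ring zify.
Set Implicit Arguments. Unset Strict Implicit. Unset Printing Implicit Defensive.
Import Order.TTheory GRing.Theory Num.Theory.
Local Open Scope ring_scope.

Local Notation i0 := (ord0 : 'I_2).
Local Notation i1 := (lift ord0 ord0 : 'I_2).

Lemma mdeg2 (mo : 'X_{1..2}) : mdeg mo = (mo i0 + mo i1)%N.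
Proof. by rewrite mdegE !big_ord_recl big_ord0 addn0. Qed.

Lemma mnm2_eq (a b : 'X_{1..2}) : mdeg a = mdeg b -> a i1 = b i1 -> a = b.
Proof.
rewrite !mdeg2 => deq eq1; apply/mnmP => -[[|[|//]] lti].
- by rewrite (_ : Ordinal lti = i0); [lia | apply: val_inj].
- by rewrite (_ : Ordinal lti = i1); last apply: val_inj.
Qed.

Lemma mcoeff_pihomog n (R : nzRingType) d (P : {mpoly R[n]}) mo :
  (pihomog mdeg d P)@_mo = if mdeg mo == d then P@_mo else 0.
Proof.
pose k := maxn (msize P) (mdeg mo).+1.
rewrite (pihomogwE _ _ (leq_maxl (msize P) (mdeg mo).+1)) big_mkcond /=.
rewrite (eq_bigr (fun m : 'X_{1..n < k} =>
           (if mdeg m == d then P@_m else 0) *: 'X_[m])); last first.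
  by move=> m _; case: ifP; rewrite ?scale0r.
by rewrite (mcoeff_mpoly (fun m => if mdeg m == d then P@_m else 0)) ?leq_maxr.
Qed.

Lemma meval_pt (R : comNzRingType) (P : {mpoly R[2]}) (x y : R) :
  P.@[pt x y] = \sum_(mo <- msupp P) P@_mo * (x ^+ mo i0 * y ^+ mo i1).
Proof.
by rewrite mevalE; apply: eq_bigr => mo _; rewrite !big_ord_recl big_ord0 mulr1.
Qed.

Lemma meval_pt_dhomog (R : comNzRingType) d (P : {mpoly R[2]}) (s x y : R) :
  P \is d.-homog -> P.@[pt (s * x) (s * y)] = s ^+ d * P.@[pt x y].
Proof.
move=> /dhomog_mf hP; rewrite !meval_pt mulr_sumr !big_seq.
apply: eq_bigr => mo /hP mo_deg.
have <- : (mo i0 + mo i1)%N = d by rewrite -mdeg2.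
rewrite exprD !exprMn; ring.
Qed.

Lemma meval_pt_scale (R : comNzRingType) N (P : {mpoly R[2]}) (s x y : R) :
  (msize P <= N)%N ->
  P.@[pt (s * x) (s * y)] = \sum_(d < N) s ^+ d * (pihomog mdeg d P).@[pt x y].
Proof.
move=> hN; rewrite {1}(pihomog_partitionE hN) raddf_sum.
by apply: eq_bigr => d _; apply: meval_pt_dhomog; apply: pihomogP.
Qed.

Lemma poly_eq0_nat_roots (R : numDomainType) (p : {poly R}) :
  (forall k : nat, p.[k.+1%:R] = 0) -> p = 0.
Proof.
move=> p0; apply/eqP; apply/negPn/negP => /max_poly_roots roots.
pose rs : seq R := [seq k.+1%:R | k <- iota 0 (size p)].
have rs_uniq : uniq rs.
  by rewrite map_inj_uniq ?iota_uniq // => i j /eqP; rewrite eqr_nat => /eqP [].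
have rs_roots : all (root p) rs by apply/allP => _ /mapP[k _ ->]; apply/eqP.
by have := roots rs rs_roots rs_uniq; rewrite size_map size_iota ltnn.
Qed.

Lemma dhomog2_eq0 (R : numDomainType) d (P : {mpoly R[2]}) :
  P \is d.-homog -> (forall k : nat, P.@[pt 1 k.+1%:R] = 0) -> P = 0.
Proof.
move=> homP P0.
have hP : {in msupp P, forall mo, mdeg mo = d} := dhomog_mf homP.
pose q : {poly R} := \sum_(mo <- msupp P) P@_mo *: 'X^(mo i1).
have q0 : q = 0.
  apply: poly_eq0_nat_roots => k; rewrite -(P0 k) meval_pt horner_sum.
  by apply: eq_bigr => mo _; rewrite hornerZ hornerXn expr1n mul1r.
apply/mpolyP => mo; rewrite mcoeff0; apply/eqP; rewrite mcoeff_eq0.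
apply/negP => mo_in; move/eqP: (congr1 (coefp (mo i1)) q0).
rewrite /= coef0 coef_sum (bigD1_seq mo) ?msupp_uniq //= coefZ coefXn eqxx mulr1.
rewrite big1_seq ?addr0 ?mcoeff_eq0 ?mo_in // => mo' /andP[neq mo'_in].
rewrite coefZ coefXn; case: eqP => [/esym eq1|]; last by rewrite mulr0.
by move: neq; rewrite (@mnm2_eq mo' mo _ eq1) ?eqxx // !hP.
Qed.

Lemma dhomog2_eq0_line (R : numFieldType) d (P : {mpoly R[2]}) :
  P \is d.-homog -> (forall x y : R, x + y = 1 -> P.@[pt x y] = 0) -> P = 0.
Proof.
move=> hP P0; apply: (dhomog2_eq0 hP) => k.
set t : R := k.+1%:R; set s : R := k.+2%:R.
have s0 : s != 0 by rewrite pnatr_eq0.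
have -> : pt 1 t = pt (s * s^-1) (s * (t / s)).
  by rewrite mulfV // mulrCA mulfV ?mulr1.
rewrite (meval_pt_dhomog _ _ _ hP) P0 ?mulr0 //.
by rewrite -{1}[s^-1]mul1r -mulrDl -mulrS mulfV.
Qed.

Lemma pihomog_eq0_mcoeff n (R : nzRingType) (P : {mpoly R[n]}) mo :
  pihomog mdeg (mdeg mo) P = 0 -> P@_mo = 0.
Proof. by move/(congr1 (mcoeff mo)); rewrite mcoeff_pihomog eqxx mcoeff0. Qed.

Lemma pihomog_msize_neq0 n (R : nzRingType) (P : {mpoly R[n]}) d :
  msize P = d.+1 -> pihomog mdeg d P != 0.
Proof.
move=> szP; have P_neq0 : P != 0 by apply: contra_eqN szP => /eqP ->; rewrite msize0.
have [deg_lead] : (mdeg (mlead P)).+1 = d.+1 by rewrite mlead_deg.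
apply: contra_neq P_neq0; rewrite -deg_lead => /pihomog_eq0_mcoeff /eqP.
by rewrite mleadc_eq0 => /eqP.
Qed.

Lemma map_mpoly_pihomog n (R S : nzRingType) (f : {additive R -> S}) d
    (P : {mpoly R[n]}) :
  map_mpoly f (pihomog mdeg d P) = pihomog mdeg d (map_mpoly f P).
Proof.
apply/mpolyP => mo; rewrite mcoeff_map_mpoly !mcoeff_pihomog mcoeff_map_mpoly.
by case: ifP; rewrite ?raddf0.
Qed.

Lemma map_mpoly_inj n (R S : nzRingType) (f : {additive R -> S}) :
  injective f -> injective (map_mpoly (n := n) f).
Proof.
move=> f_inj P Q /mpolyP fPQ; apply/mpolyP => mo; apply: f_inj.
by rewrite -!mcoeff_map_mpoly.
Qed.

Lemma pihomog_eq0_scale_inv (R : numDomainType) (Q : {mpoly R[2]}) (c : R) d :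
  (forall x y, Q.@[pt (c * x) (c * y)] = Q.@[pt x y]) -> c ^+ d != 1 ->
  pihomog mdeg d Q = 0.
Proof.
move=> Q_inv cd_neq1; apply: (dhomog2_eq0 (pihomogP _ _ _)) => k.
pose N := maxn (msize Q) d.+1.
pose e i := (pihomog mdeg i Q).@[pt 1 k.+1%:R].
(* On the ray s (1, k+1), invariance makes this polynomial in s vanish
   at every positive integer s. *)
pose r := \poly_(i < N) ((c ^+ i - 1) * e i).
have r0 : r = 0.
  apply: poly_eq0_nat_roots => j; rewrite horner_poly.
  rewrite -[RHS](subrr Q.@[pt (j.+1%:R * 1) (j.+1%:R * k.+1%:R)]).
  rewrite -[X in X - _]Q_inv !mulrA.
  rewrite !(meval_pt_scale _ _ _ (leq_maxl (msize Q) d.+1)) -sumrB.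
  by apply: eq_bigr => i _; rewrite exprMn /e; ring.
have := congr1 (coefp d) r0; rewrite /= coef_poly leq_maxr coef0 => /eqP.
by rewrite mulf_eq0 subr_eq0 (negbTE cd_neq1) => /eqP.
Qed.

Lemma pihomog0_eq0 (R : numDomainType) (Q : {mpoly R[2]}) :
  Q.@[pt 0 0] = 0 -> pihomog mdeg 0 Q = 0.
Proof.
move=> Q00; apply: (dhomog2_eq0 (pihomogP _ _ _)) => k.
have := meval_pt_scale 0 1 k.+1%:R (leqnSn (msize Q)).
rewrite !mul0r Q00 big_ord_recl big1 => [|i _]; last by rewrite expr0n /= mul0r.
by rewrite expr0 mul1r addr0.
Qed.

Lemma sum_pihomog_dvdn n (R : nzRingType) (P : {mpoly R[n]}) m K :
  (0 < m)%N -> (msize P <= (K * m).+1)%N ->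
  (forall d, ~~ (m %| d)%N -> pihomog mdeg d P = 0) -> pihomog mdeg 0 P = 0 ->
  P = \sum_(1 <= j < K.+1) pihomog mdeg (j * m) P.
Proof.
move=> m_gt0 szP P_ndvd P0; apply/mpolyP => mo; rewrite raddf_sum /=.
under eq_bigr => j _ do rewrite mcoeff_pihomog.
have [mo_in|mo_nin] := boolP (mo \in msupp P); last first.
  by rewrite big1 ?(memN_msupp_eq0 mo_nin) // => j _; case: ifP.
have Pmo_neq0 : P@_mo != 0 by rewrite -mcoeff_msupp.
have dvd_mo : (m %| mdeg mo)%N.
  by apply: contraNT Pmo_neq0 => /P_ndvd /pihomog_eq0_mcoeff ->.
have [j0 deg_mo] : exists j0, mdeg mo = (j0 * m)%N.
  by exists (mdeg mo %/ m)%N; rewrite divnK.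
have j0_in : j0 \in index_iota 1 K.+1.
  rewrite mem_index_iota lt0n ltnS -(leq_pmul2r m_gt0) -deg_mo -ltnS.
  rewrite (leq_trans (msize_mdeg_lt mo_in) szP) andbT.
  apply: contraNneq Pmo_neq0 => j0_eq0.
  by apply/eqP/pihomog_eq0_mcoeff; rewrite deg_mo j0_eq0.
rewrite (bigD1_seq j0) //=; last exact: iota_uniq.
rewrite deg_mo eqxx big1 ?addr0 // => j.
by rewrite eqn_pmul2r // eq_sym => /negbTE ->.
Qed.

Lemma Fpoly_homog (R : nzRingType) m : Fpoly R m \is m.-homog.
Proof.
rewrite /Fpoly -[X in X.-homog]mul1n; apply: dhomogMn.
by apply: rpredD; rewrite dhomogX; apply/eqP; exact: mdeg1.
Qed.

Lemma meval_Fpoly (R : comNzRingType) m (x y : R) :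
  (Fpoly R m).@[pt x y] = (x + y) ^+ m.
Proof. by rewrite /Fpoly rmorphXn rmorphD /= !mevalXU. Qed.

(* [Hrec F g j] is the paper's H_{jm}: H_0 = 1 and F H_{(j-1)m} - H_{jm} = g j. *)
Fixpoint Hrec (R : nzRingType) (F : {mpoly R[2]}) (g : nat -> {mpoly R[2]}) j :=
  if j is i.+1 then F * Hrec F g i - g j else 1.

Section Existence.
Variables (R : numFieldType) (m K : nat) (g : nat -> {mpoly R[2]}).
Hypothesis g_homog : forall j, g j \is (j * m).-homog.

Local Notation H := (Hrec (Fpoly R m) g).

Lemma Hrec_homog j : H j \is (j * m).-homog.
Proof.
elim: j => [|j IH] /=; first by rewrite mul0n dhomog1.
apply: rpredB; last exact: g_homog.
by rewrite mulSn; exact: dhomogM (Fpoly_homog R m) IH.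
Qed.

Lemma meval_Hrec x y j : x + y = 1 ->
  (H j).@[pt x y] = 1 - \sum_(1 <= i < j.+1) (g i).@[pt x y].
Proof.
move=> xy1; elim: j => [|j IH] /=; first by rewrite big_geq // subr0 meval1.
rewrite mevalB mevalM meval_Fpoly xy1 expr1n mul1r IH [in RHS]big_nat_recr //=.
by rewrite opprD addrA.
Qed.

Variable G : {mpoly R[2]}.
Hypotheses (G_sum : G = \sum_(1 <= j < K.+1) g j)
  (G_line : forall x y, x + y = 1 -> G.@[pt x y] = 1).

Lemma Hrec_eq0 : H K = 0.
Proof.
apply: (dhomog2_eq0_line (Hrec_homog K)) => x y xy1.
by rewrite meval_Hrec // -(G_line xy1) G_sum raddf_sum subrr.
Qed.

Lemma telescope_Hrec : G = telescope m K H.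
Proof.
have Hext_Hrec i : (i <= K)%N -> Hext K H i = H i.
  by rewrite /Hext; case: eqP => [->|_] //; case: eqP => [->|_] //; rewrite Hrec_eq0.
rewrite G_sum /telescope; apply: eq_big_nat => -[//|j] /andP[_ jK].
have jK' : (j < K)%N := jK.
by rewrite !Hext_Hrec ?(ltnW jK') //= subKr.
Qed.

End Existence.

Section TelescopeTerms.
Variables (R : nzRingType) (m K : nat) (H : nat -> {mpoly R[2]}).
Hypotheses (m_gt0 : (0 < m)%N)
  (H_homog : forall j, (1 <= j <= K.-1)%N -> H j \is (j * m).-homog).

Local Notation E := (Hext K H).

Lemma Hext_homog i : (i <= K)%N -> E i \is (i * m).-homog.
Proof.
rewrite /Hext; case: eqP => [->|i_neq0 iK]; first by rewrite mul0n dhomog1.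
by case: eqP => [_|iK']; [exact: rpred0 | apply: H_homog; lia].
Qed.

Lemma telescope_term_homog j : (1 <= j <= K)%N ->
  Fpoly R m * E j.-1 - E j \is (j * m).-homog.
Proof.
case: j => [//|j] /= jK; apply: rpredB; last exact: Hext_homog.
by rewrite mulSn; apply: dhomogM (Fpoly_homog R m) (Hext_homog (ltnW jK)).
Qed.

Lemma pihomog_telescope j : (1 <= j <= K)%N ->
  pihomog mdeg (j * m) (telescope m K H) = Fpoly R m * E j.-1 - E j.
Proof.
move=> jK; rewrite raddf_sum (bigD1_seq j) /=; last exact: iota_uniq.
  2: by rewrite mem_index_iota.
rewrite pihomog_dE ?telescope_term_homog // big1_seq ?addr0 // => i /andP[ij].
rewrite mem_index_iota => iK; apply: (pihomog_ne0 (d := (i * m)%N)).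
  by rewrite eqn_pmul2r.
exact: telescope_term_homog.
Qed.

End TelescopeTerms.

Lemma exists_argmax_seq (T : eqType) (f : T -> nat) (s : seq T) :
  s != [::] -> exists2 x, x \in s & forall y, y \in s -> (f y <= f x)%N.
Proof.
elim: s => [//|a [|b s] IH] _.
  by exists a => [|y]; rewrite ?mem_seq1 // => /eqP ->.
have [x x_in x_max] := IH isT.
have [fax|fxa] := leqP (f a) (f x).
  exists x => [|y]; first by rewrite in_cons x_in orbT.
  by rewrite in_cons => /orP[/eqP ->|/x_max].
exists a => [|y]; first exact: mem_head.
by rewrite in_cons => /orP[/eqP ->|/x_max/leq_trans->] //; apply: ltnW.
Qed.

Lemma sum_count_eq_le (T : eqType) (f : T -> nat) (s : seq T) (r : seq nat) :
  uniq r -> (\sum_(j <- r) count (fun x => f x == j) s <= size s)%N.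
Proof.
move=> r_uniq; elim: s => [|x s IH] /=; first by rewrite big1.
rewrite big_split /= -add1n leq_add //.
have -> : (\sum_(j <- r) (f x == j) = count_mem (f x) r)%N.
  rewrite -sum1_count [RHS]big_mkcond; apply: eq_bigr => j _.
  by rewrite /= eq_sym; case: (j == f x).
by rewrite count_uniq_mem ?leq_b1.
Qed.

Lemma leq_telescope (a b : nat -> nat) c K :
  (forall j, 1 <= j <= K -> a j.-1 + c <= b j + a j)%N ->
  (a 0 + K * c <= \sum_(1 <= j < K.+1) b j + a K)%N.
Proof.
elim: K => [|K IH] ab; first by rewrite big_geq // mul0n addn0.
have := IH (fun j jK => ab j ltac:(lia)); have := ab K.+1 ltac:(lia).
by move=> /= abK IHK; rewrite big_nat_recr //= mulSn; lia.
Qed.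

Section Supports.
Variable R : numDomainType.
Implicit Types (P Q B : {mpoly R[2]}).

Lemma nonneg_coefsD P Q :
  nonneg_coefs P -> nonneg_coefs Q -> nonneg_coefs (P + Q).
Proof. by move=> P_nneg Q_nneg mo; rewrite mcoeffD addr_ge0. Qed.

Lemma nonneg_coefsM P Q :
  nonneg_coefs P -> nonneg_coefs Q -> nonneg_coefs (P * Q).
Proof.
by move=> P_nneg Q_nneg mo; rewrite mcoeffM sumr_ge0 // => k _; rewrite mulr_ge0.
Qed.

Lemma nonneg_coefsX (mo : 'X_{1..2}) : nonneg_coefs ('X_[mo] : {mpoly R[2]}).
Proof. by move=> mo'; rewrite mcoeffX ler0n. Qed.

Lemma nonneg_coefs_Fpoly m : nonneg_coefs (Fpoly R m).
Proof.
elim: m => [|m IH]; first by move=> mo; rewrite /Fpoly expr0 mcoeff1 ler0n.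
rewrite /Fpoly exprS; apply: nonneg_coefsM IH.
by apply: nonneg_coefsD; apply: nonneg_coefsX.
Qed.

Lemma Nmon_subr P Q : (Nmon P <= Nmon (P - Q) + Nmon Q)%N.
Proof.
rewrite -size_cat; apply: uniq_leq_size (msupp_uniq P) _ => mo mo_in.
by apply: (@msuppD_le _ _ (P - Q) Q); rewrite subrK.
Qed.

Lemma sum_Nmon_pihomog P (r : seq nat) :
  uniq r -> (\sum_(d <- r) Nmon (pihomog mdeg d P) <= Nmon P)%N.
Proof.
move=> r_uniq; apply: leq_trans (sum_count_eq_le mdeg (msupp P) r_uniq).
apply: leq_sum => d _; rewrite -size_filter.
apply: uniq_leq_size (msupp_uniq _) _ => mo.
rewrite mem_filter !mcoeff_msupp mcoeff_pihomog.
by case: (mdeg mo == d); rewrite ?eqxx.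
Qed.

(* The y-multiples of the monomials of B are distinct, and x x^a y^b with a
   maximal is none of them. *)
Lemma Nmon_XY_mul B : nonneg_coefs B -> B != 0 ->
  ((Nmon B).+1 <= Nmon (('X_0 + 'X_1) * B)%R)%N.
Proof.
move=> B_nneg B_neq0.
have B_pos mo : mo \in msupp B -> 0 < B@_mo.
  by rewrite mcoeff_msupp lt_def => ->; apply: B_nneg.
have : msupp B != [::] by rewrite msupp_eq0.
move=> /(exists_argmax_seq (fun mo : 'X_{1..2} => mo i0)) [a a_in a_max].
have -> : ('X_0 + 'X_1) * B = B * 'X_[U_(0)] + B * 'X_[U_(1)].
  by rewrite mulrC mulrDr.
have [Bx_nneg By_nneg] := (nonneg_coefsM B_nneg (nonneg_coefsX U_(0)),
                           nonneg_coefsM B_nneg (nonneg_coefsX U_(1))).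
pose L := [seq (U_(1%R) + mo)%MM | mo <- msupp B] ++ [:: (U_(0%R) + a)%MM].
have L_uniq : uniq L.
  rewrite cat_uniq /= orbF andbT map_inj_uniq ?msupp_uniq /=; last exact: addmI.
  apply/mapP => -[mo mo_in] /(congr1 (fun mo' : 'X_{1..2} => mo' i0)).
  by rewrite !mnmDE !mnm1E /=; have := a_max mo mo_in; lia.
have L_sub : {subset L <= msupp (B * 'X_[U_(0)] + B * 'X_[U_(1)])}.
  move=> mo; rewrite mem_cat mem_seq1 => /orP[/mapP [mo' mo'_in ->]|/eqP ->].
    rewrite mcoeff_msupp mcoeffD [X in _ + X]mcoeffMX gt_eqF //.
    by rewrite ltr_wpDl ?B_pos.
  rewrite mcoeff_msupp mcoeffD [X in X + _]mcoeffMX gt_eqF //.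
  by rewrite ltr_wpDr ?B_pos.
by have := uniq_leq_size L_uniq L_sub; rewrite size_cat size_map addn1.
Qed.

Lemma Nmon_Fpoly_mul m B : nonneg_coefs B -> B != 0 ->
  (Nmon B + m <= Nmon (Fpoly R m * B))%N.
Proof.
move=> B_nneg B_neq0; elim: m => [|m IH]; first by rewrite /Fpoly expr0 mul1r addn0.
have FB_neq0 : Fpoly R m * B != 0.
  apply: contraTneq IH => ->; rewrite /Nmon msupp0 /= -ltnNge addn_gt0.
  by rewrite lt0n size_eq0 msupp_eq0 B_neq0.
rewrite addnS (leq_ltn_trans IH) // /Fpoly exprS -mulrA.
exact: Nmon_XY_mul (nonneg_coefsM (nonneg_coefs_Fpoly m) B_nneg) FB_neq0.
Qed.

End Supports.

Section LowerBound.
Variables (R : numDomainType) (m K : nat) (G : {mpoly R[2]}).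
Variable H : nat -> {mpoly R[2]}.
Hypotheses (m_gt0 : (0 < m)%N) (K_gt0 : (0 < K)%N)
  (G_nneg : nonneg_coefs G) (szG : msize G = (K * m).+1)
  (H_homog : forall j, (1 <= j <= K.-1)%N -> H j \is (j * m).-homog)
  (G_tele : G = telescope m K H)
  (H_nneg : forall j, (1 <= j <= K.-1)%N -> nonneg_coefs (H j)).

Local Notation E := (Hext K H).
Local Notation T j := (Fpoly R m * E j.-1 - E j).

Lemma HextK : E K = 0.
Proof. by rewrite /Hext eqxx; case: eqP => // K0; move: K_gt0; rewrite K0. Qed.

Lemma Hext_nneg i : (i <= K)%N -> nonneg_coefs (E i).
Proof.
rewrite /Hext; case: eqP => [_ _ mo|i_neq0 iK]; first by rewrite mcoeff1 ler0n.
case: eqP => [_ mo|iK']; first by rewrite mcoeff0.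
by apply: H_nneg; lia.
Qed.

Lemma telescope_term_nneg j : (1 <= j <= K)%N -> nonneg_coefs (T j).
Proof.
move=> jK mo; rewrite -(pihomog_telescope m_gt0 H_homog jK) -G_tele.
by rewrite mcoeff_pihomog; case: ifP.
Qed.

Lemma Hext_eq0S i : (i < K)%N -> E i = 0 -> E i.+1 = 0.
Proof.
move=> iK Ei0; apply/mpolyP => mo; rewrite mcoeff0.
have := telescope_term_nneg (j := i.+1) iK mo.
rewrite /= Ei0 mulr0 sub0r mcoeffN oppr_ge0.
by move=> E_npos; apply/eqP; rewrite eq_le E_npos Hext_nneg.
Qed.

Lemma Hext_neq0 i : (i < K)%N -> E i != 0.
Proof.
move=> iK; apply/eqP => Ei0.
(* By nonnegativity a zero propagates up to E K.-1, which would kill the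
   top-degree component of G. *)
have E_eq0 k : (i + k < K)%N -> E (i + k) = 0.
  elim: k => [|k IH] ikK; first by rewrite addn0.
  by rewrite addnS; apply: Hext_eq0S (IH _); lia.
have EK1 : E K.-1 = 0.
  by have := E_eq0 (K.-1 - i)%N; rewrite subnKC; [apply; lia | lia].
have KK : (1 <= K <= K)%N by rewrite K_gt0 leqnn.
move: (pihomog_msize_neq0 szG); rewrite G_tele (pihomog_telescope m_gt0 H_homog KK).
by rewrite EK1 HextK mulr0 subr0 eqxx.
Qed.

Lemma Nmon_telescope_term j : (1 <= j <= K)%N ->
  (Nmon (E j.-1) + m <= Nmon (T j) + Nmon (E j))%N.
Proof.
move=> jK; apply: leq_trans (Nmon_subr _ (E j)).
by apply: Nmon_Fpoly_mul; [apply: Hext_nneg | apply: Hext_neq0]; lia.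
Qed.

Lemma Nmon_telescope_ge : ((K * m).+1 <= Nmon G)%N.
Proof.
have := leq_telescope (a := fun j => Nmon (E j)) (b := fun j => Nmon (T j))
  Nmon_telescope_term.
rewrite /= HextK /Nmon msupp1 msupp0 addn0 add1n => /leq_trans; apply.
have -> : (\sum_(1 <= j < K.+1) Nmon (T j) =
    \sum_(d <- [seq j * m | j <- index_iota 1 K.+1]) Nmon (pihomog mdeg d G))%N.
  rewrite big_map; apply: eq_big_nat => j jK.
  by rewrite G_tele (pihomog_telescope m_gt0 H_homog jK).
apply: sum_Nmon_pihomog; rewrite map_inj_uniq ?/index_iota ?iota_uniq // => i j.
by move/eqP; rewrite eqn_pmul2r // => /eqP.
Qed.

End LowerBound.

Unset Implicit Arguments.

Theorem theorem4p1 (R : rcfType) (m : nat) (eta : R[i]) (G : {mpoly R[2]})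
  (K : nat) :
  (2 <= m)%N ->
  m.-primitive_root eta ->
  (forall x y : R[i],
      (cplx G).@[pt (eta * x) (eta * y)] = (cplx G).@[pt x y]) ->
  (forall x y : R, x + y = 1 -> G.@[pt x y] = 1) ->
  nonneg_coefs G ->
  G.@[pt 0 0] = 0 ->
  (0 < K)%N ->
  msize G = (K * m).+1 ->
  (exists H : nat -> {mpoly R[2]},
      (forall j, (1 <= j <= K.-1)%N -> H j \is (j * m).-homog) /\
      G = telescope m K H)
  /\
  (forall H : nat -> {mpoly R[2]},
      (forall j, (1 <= j <= K.-1)%N -> H j \is (j * m).-homog) ->
      G = telescope m K H ->
      (forall j, (1 <= j <= K.-1)%N -> nonneg_coefs (H j)) ->
      ((K * m).+1 <= Nmon G)%N).
Proof.
move=> m_ge2 eta_prim G_inv G_line G_nneg G00 K_gt0 szG.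
have m_gt0 : (0 < m)%N by apply: leq_trans m_ge2.
split; last by move=> H; apply: Nmon_telescope_ge.
have G_ndvd d : ~~ (m %| d)%N -> pihomog mdeg d G = 0.
  move=> m_ndvd; apply: (map_mpoly_inj (@fmorph_inj _ _ (real_complex R))).
  rewrite map_mpoly_pihomog raddf0; apply: (pihomog_eq0_scale_inv G_inv).
  by rewrite -(prim_order_dvd eta_prim).
have G_sum := sum_pihomog_dvdn m_gt0 (eq_leq szG) G_ndvd (pihomog0_eq0 G00).
have G_homog j : pihomog mdeg (j * m) G \is (j * m).-homog by apply: pihomogP.
exists (Hrec (Fpoly R m) (fun j => pihomog mdeg (j * m) G)).
by split; [move=> j _; apply: Hrec_homog | apply: telescope_Hrec G_sum G_line].
Qed.
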